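(* For every integer $d\ge 2$ there is a polynomial $p_d$ of degree exactly $d-2$ such that $v_n^d=p_d(n)$ for all integers $n\ge \lceil d/2\rceil+1$.
   Context: The $2\times n$ Miura-ori $M_{2,n}$ ($n\ge1$) has faces $\alpha_{i,j}$ ($i\in\{1,2\}$, $j\in\{1,\dots,n\}$), interior vertices $x_1,\dots,x_{n-1}$, and creases $e_0$ and $e_{3k-1},e_{3k},e_{3k+1}$ ($k=1,\dots,n-1$). At $x_k$ the creases are left $e_{3k-3}$, top $e_{3k-1}$, right $e_{3k}$, bottom $e_{3k+1}$. Face $\alpha_{1,j}$ is bordered by those of $e_{3j-4}$ (iff $j\ge2$), $e_{3j-3}$, $e_{3j-1}$ (iff $j\le n-1$); $\alpha_{2,j}$ by those of $e_{3j-2}$ (iff $j\ge2$), $e_{3j-3}$, $e_{3j+1}$ (iff $j\le n-1$). An MV assignment $\mu$ maps creases to $\{1,-1\}$; it is locally valid if for each $k$ exactly one of $\mu(e_{3k-1}),\mu(e_{3k}),\mu(e_{3k+1})$ differs from $\mu(e_{3k-3})$. The face flip $\mu_\alpha$ negates $\mu$ on the creases bordering $\alpha$; $\alpha$ is flippable under $\mu$ if $\mu,\mu_\alpha$ are both locally valid. $v_n^d$ denotes the number of locally valid MV assignments of $M_{2,n}$ with exactly $d$ flippable faces, i.e., the number of vertices of degree $d$ in the origami flip graph ${\rm OFG}(M_{2,n})$. *)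

From mathcomp Require Import all_boot all_order all_algebra.
Set Implicit Arguments. Unset Strict Implicit. Unset Printing Implicit Defensive.

(* Creases are e_0 and e_{3k-1}, e_{3k}, e_{3k+1}
   (k = 1..n-1), i.e. the labels {0} U {2, ..., 3n-2}: 3n-2 creases in total.
   We index them by 'I_(3n-2): position c carries label 0 if c = 0 and c+1
   otherwise. *)
Definition crease (n : nat) := 'I_(3 * n - 2).

Definition crease_label (n : nat) (c : crease n) : nat :=
  if val c == 0 then 0 else (val c).+1.

(* An MV assignment: true stands for +1, false for -1. *)
Definition MV (n : nat) := {ffun crease n -> bool}.

Definition mv_at (n : nat) (mu : MV n) (i : nat) : bool :=
  [exists c : crease n, (crease_label c == i) && mu c].

(* Local validity: at each interior vertex x_k (k = 1..n-1) with left crease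
   e_{3k-3} and top/right/bottom creases e_{3k-1}, e_{3k}, e_{3k+1}, exactly
   one of the latter three differs from the left one. *)
Definition locally_valid (n : nat) (mu : MV n) : bool :=
  [forall k : 'I_n, (1 <= val k) ==>
     (count (fun i => mv_at mu i != mv_at mu (3 * val k - 3))
        [:: 3 * val k - 1; 3 * val k; 3 * val k + 1] == 1)].

(* Faces alpha_{i,j}: i = val r + 1 in {1,2}, j = val s + 1 in {1..n}. *)
Definition face (n : nat) := ('I_2 * 'I_n)%type.

Definition face_creases (n : nat) (f : face n) : seq nat :=
  let j := (val f.2).+1 in
  if val f.1 == 0 then
    (if 2 <= j then [:: 3 * j - 4] else [::]) ++ [:: 3 * j - 3] ++
    (if j <= n - 1 then [:: 3 * j - 1] else [::])
  else
    (if 2 <= j then [:: 3 * j - 2] else [::]) ++ [:: 3 * j - 3] ++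
    (if j <= n - 1 then [:: 3 * j + 1] else [::]).

Definition face_flip (n : nat) (mu : MV n) (f : face n) : MV n :=
  [ffun c => mu c (+) (crease_label c \in face_creases f)].

Definition flippable (n : nat) (mu : MV n) (f : face n) : bool :=
  locally_valid mu && locally_valid (face_flip mu f).

(* v_n^d: number of locally valid MV assignments of M_{2,n} with exactly d
   flippable faces (= number of degree-d vertices of OFG(M_{2,n})). *)
Definition v (n d : nat) : nat :=
  #|[set mu : MV n | locally_valid mu &&
                     (#|[set f : face n | flippable mu f]| == d)]|.

(* At an interior vertex x_k of a locally valid assignment exactly
   one of the top, right and bottom creases disagrees with the left crease; call
   it the letter 0, 1 or 2 of x_k.  An assignment is determined by mu(e_0) and its
   word of n-1 letters, and every word arises.  Flipping a face only disturbs its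
   two vertices, and it keeps both valid iff each of them avoids one forbidden
   letter; hence the degree of mu is a sum of local weights along the word padded
   with the letter 1 on both ends.  Counting words by weight, X(m, d) (after the
   letter 1) and Y(m, d) (after the letter 0, or symmetrically 2) satisfy
     X(m+1, d+2) = X(m, d) + 2 Y(m, d+1),
     Y(m+1, d+2) = Y(m, d+2) + Y(m, d+1) + X(m, d+1),
   and v_n^d = 2 X(n-1, d).  By induction on d, summing the second recurrence with
   falling factorials, X(., d) and Y(., d) agree with polynomials of degree d-2 and
   d-1 from m = ceil(d/2) and m = floor(d/2) on. *)

From mathcomp Require Import all_boot all_order all_algebra.
From mathcomp Require Import zify ring.
Set Implicit Arguments.
Unset Strict Implicit.
Unset Printing Implicit Defensive.
Import GRing.Theory Num.Theory.

(** * Discrete antiderivatives of polynomials *)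

Section DifferencePolynomials.

Local Open Scope ring_scope.

Variable R : numFieldType.
Implicit Types (p q : {poly R}) (x : R).

Definition falling_poly (s : nat) : {poly R} := \prod_(i < s) ('X - i%:R%:P).

Lemma size_falling_poly s : size (falling_poly s) = s.+1.
Proof. by rewrite size_prod_XsubC /index_enum -enumT size_enum_ord. Qed.

Lemma lead_coef_falling_poly s : lead_coef (falling_poly s) = 1.
Proof. exact/eqP/monic_prod_XsubC. Qed.

Lemma horner_falling_poly s x : (falling_poly s).[x] = \prod_(i < s) (x - i%:R).
Proof. by rewrite horner_prod; apply: eq_bigr => i _; rewrite hornerXsubC. Qed.

Lemma falling_poly_delta s x :
  (falling_poly s.+1).[x + 1] - (falling_poly s.+1).[x] = s.+1%:R * (falling_poly s).[x].
Proof.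
have shift : (falling_poly s.+1).[x + 1] = (x + 1) * (falling_poly s).[x].
  rewrite !horner_falling_poly big_ord_recl subr0; congr (_ * _).
  by apply: eq_bigr => i _; rewrite /= /bump /= add1n -natr1; ring.
rewrite shift [(falling_poly s.+1).[x]]horner_falling_poly big_ord_recr.
rewrite -horner_falling_poly /= -natr1; ring.
Qed.

Lemma size_sub_same_lead p q : size p = size q -> lead_coef p = lead_coef q ->
  (0 < size p)%N -> (size (p - q)%R < size p)%N.
Proof.
move=> eq_size eq_lead p_gt0; rewrite -(prednK p_gt0) ltnS.
apply/leq_sizeP => j; rewrite leq_eqVlt coefB => /orP[/eqP <-|ltj].
  by move: eq_lead; rewrite /lead_coef eq_size => ->; rewrite subrr.
by rewrite !nth_default ?subrr // -?eq_size -(prednK p_gt0).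
Qed.

Lemma poly_antidifference q : q != 0 ->
  exists P : {poly R}, (forall x, P.[x + 1] - P.[x] = q.[x]) /\ size P = (size q).+1.
Proof.
have [k] := ubnP (size q); elim: k q => // k IH q size_q q_neq0.
have [s size_qE] : exists s, size q = s.+1.
  by exists (size q).-1; rewrite prednK // size_poly_gt0.
set c := lead_coef q; set r := q - c *: falling_poly s.
have size_r : (size r <= s)%N.
  have c_neq0 : c != 0 by rewrite lead_coef_eq0.
  rewrite -ltnS -size_qE; apply: size_sub_same_lead; rewrite ?size_qE //.
    by rewrite size_scale // size_falling_poly.
  by rewrite lead_coefZ lead_coef_falling_poly mulr1.
have [P' [deltaP' size_P']] : exists P',
    (forall x, P'.[x + 1] - P'.[x] = r.[x]) /\ (size P' <= s.+1)%N.
  have [->|r_neq0] := eqVneq r 0.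
    by exists 0; rewrite size_poly0; split=> // x; rewrite !horner0 subrr.
  have r_lt_k : (size r < k)%N by rewrite size_qE in size_q; lia.
  by have [P' [deltaP' size_P']] := IH r r_lt_k r_neq0; exists P'; rewrite size_P'.
have s1_neq0 : s.+1%:R != 0 :> R by rewrite pnatr_eq0.
exists ((c / s.+1%:R) *: falling_poly s.+1 + P'); split.
  move=> x; rewrite !(hornerD, hornerZ) opprD addrACA -mulrBr falling_poly_delta.
  rewrite deltaP' /r hornerD hornerN hornerZ mulrA divfK //; ring.
rewrite size_polyDl size_scale ?mulf_neq0 ?invr_eq0 ?lead_coef_eq0 ?size_falling_poly //.
by rewrite size_qE; lia.
Qed.

Definition eventually_poly (t : nat) p (F : nat -> R) :=
  forall m, (t <= m)%N -> F m = p.[m%:R].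

Lemma eventually_poly_le t1 t2 p F :
  (t1 <= t2)%N -> eventually_poly t1 p F -> eventually_poly t2 p F.
Proof. by move=> t12 Fp m t2m; apply/Fp/(leq_trans t12). Qed.

Lemma eventually_poly_shift t p F :
  eventually_poly t p (fun m => F m.+1) -> eventually_poly t.+1 (p \Po ('X - 1)) F.
Proof.
by move=> Fp [//|m] tm; rewrite Fp // horner_comp hornerXsubC -natr1 addrK.
Qed.

Lemma eventually_poly_antidifference t q F : q != 0 ->
  eventually_poly t q (fun m => F m.+1 - F m) ->
  exists P : {poly R}, size P = (size q).+1 /\ eventually_poly t P F.
Proof.
move=> q_neq0 dFq; have [P0 [deltaP0 size_P0]] := poly_antidifference q_neq0.
exists (P0 + (F t - P0.[t%:R])%:P); split.
  rewrite size_polyDl // size_polyC size_P0 (leq_ltn_trans (leq_b1 _)) //.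
  by rewrite ltnS size_poly_gt0.
move=> m /subnKC <-; elim: (m - t)%N => [|i IH]; first by rewrite addn0 hornerD hornerC addrC subrK.
rewrite addnS -[F _](subrK (F (t + i)%N)) dFq ?leq_addr // IH -natr1 !hornerD !hornerC.
by rewrite -deltaP0; ring.
Qed.

End DifferencePolynomials.

(** * Words over {0, 1, 2} counted by weight *)

(* The letter 0, 1 or 2 of a vertex says whether its top, right or bottom crease
   disagrees with its left crease; [flip_weight a b] is the number of flippable
   faces of a column whose left and right vertices carry the letters [a] and [b]. *)
Definition flip_weight (a b : nat) : nat := ((a != 2) && (b != 0)) + ((a != 0) && (b != 2)).

Definition score (a : nat) (w : seq nat) : nat := sumn (pairmap flip_weight a (rcons w 1)).

Lemma score_cons a x w : score a (x :: w) = flip_weight a x + score x w.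
Proof. by []. Qed.

Lemma score_gt0 a w : 0 < score a w.
Proof.
elim: w a => [|x w IH] a; last by rewrite score_cons ltn_addl.
by case: a => [|[|[]]].
Qed.

Lemma score1_gt1 w : 1 < score 1 w.
Proof.
by case: w => [//|x w]; rewrite score_cons; have := score_gt0 x w; case: x => [|[|[]]].
Qed.

Fixpoint words (m : nat) : seq (seq nat) :=
  if m is m'.+1 then [seq x :: w | x <- iota 0 3, w <- words m'] else [:: [::]].

Lemma words_S m : words m.+1 = [seq x :: w | x <- iota 0 3, w <- words m].
Proof. by []. Qed.

Lemma mem_words m w : (w \in words m) = (size w == m) && all (fun x => x < 3) w.
Proof.
elim: m w => [|m IH] w; first by case: w.
rewrite words_S; apply/allpairsP/andP => [[[x u] [/= x3 u_m ->]]|[size_w all_w]].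
  by move: x3 u_m; rewrite IH !inE /= => /or3P[]/eqP-> /andP[/eqP-> ->].
case: w size_w all_w => [//|x w] /= /eqP[size_w] /andP[x3 w3].
by exists (x, w); rewrite /= IH size_w w3 eqxx !inE; case: x x3 => [|[|[]]].
Qed.

Lemma uniq_words m : uniq (words m).
Proof.
elim: m => // m IH; rewrite words_S allpairs_uniq ?iota_uniq //.
by move=> [x u] [y w] _ _ /= [-> ->].
Qed.

Definition nwords (a m d : nat) : nat := count (fun w => score a w == d) (words m).

Lemma nwordsS a m d : nwords a m.+1 d =
  \sum_(x < 3) count (fun w => flip_weight a x + score x w == d) (words m).
Proof.
by rewrite /nwords words_S /= !count_cat !count_map !big_ord_recl big_ord0 !addnA addn0.
Qed.

Lemma nwords1SS m d : nwords 1 m.+1 d.+2 = nwords 0 m d.+1 + nwords 1 m d + nwords 2 m d.+1.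
Proof.
rewrite nwordsS !big_ord_recl big_ord0 addn0 addnA.
by congr (_ + _ + _); apply: eq_count => w /=; rewrite /flip_weight /=; lia.
Qed.

Lemma nwords0SS m d : nwords 0 m.+1 d.+1 = nwords 0 m d.+1 + nwords 1 m d + nwords 2 m d.
Proof.
rewrite nwordsS !big_ord_recl big_ord0 addn0 addnA.
by congr (_ + _ + _); apply: eq_count => w /=; rewrite /flip_weight /=; lia.
Qed.

Lemma nwords2SS m d : nwords 2 m.+1 d.+1 = nwords 0 m d + nwords 1 m d + nwords 2 m d.+1.
Proof.
rewrite nwordsS !big_ord_recl big_ord0 addn0 addnA.
by congr (_ + _ + _); apply: eq_count => w /=; rewrite /flip_weight /=; lia.
Qed.

Lemma nwords_0 a m : nwords a m 0 = 0.
Proof.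
by rewrite /nwords (eq_count (a2 := pred0)) ?count_pred0 // => w; rewrite eqn0Ngt score_gt0.
Qed.

Lemma nwords1_1 m : nwords 1 m 1 = 0.
Proof.
rewrite /nwords (eq_count (a2 := pred0)) ?count_pred0 // => w.
by apply/negbTE; rewrite neq_ltn score1_gt1 orbT.
Qed.

Lemma nwords0_1 m : nwords 0 m 1 = 1.
Proof. by elim: m => // m IH; rewrite nwords0SS IH !nwords_0. Qed.

Lemma nwords2E m d : nwords 2 m d = nwords 0 m d.
Proof.
elim: m d => [|m IH] [|d]; rewrite ?nwords_0 //.
by rewrite nwords2SS nwords0SS !IH; lia.
Qed.

Section NwordsPolynomial.

Local Open Scope ring_scope.

Definition nwords_polynomial (d : nat) : Prop :=
  (exists pX : {poly rat},
     size pX = d.-1 /\ eventually_poly (uphalf d) pX (fun m => (nwords 1 m d)%:R)) /\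
  (exists pY : {poly rat},
     size pY = d /\ eventually_poly d./2 pY (fun m => (nwords 0 m d)%:R)).

Lemma nwords_polynomial0 : nwords_polynomial 0.
Proof. by split; exists 0; rewrite size_poly0; split=> // m _; rewrite nwords_0 horner0. Qed.

Lemma nwords_polynomial1 : nwords_polynomial 1.
Proof.
split; first by exists 0; rewrite size_poly0; split=> // m _; rewrite nwords1_1 horner0.
by exists 1; rewrite size_poly1; split=> // m _; rewrite nwords0_1 hornerC.
Qed.

Lemma nwords_polynomialSS d :
  nwords_polynomial d -> nwords_polynomial d.+1 -> nwords_polynomial d.+2.
Proof.
move=> [[pX0 [size_pX0 pX0E]] _] [[pX1 [size_pX1 pX1E]] [pY1 [size_pY1 pY1E]]].
split.
  exists ((pX0 + 2%:R *: pY1) \Po ('X - 1)); split.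
    rewrite size_comp_poly2 ?size_XsubC // addrC size_polyDl size_scale ?pnatr_eq0 //.
    by rewrite size_pX0 size_pY1 ltnS leq_pred.
  apply: eventually_poly_shift => m le_m.
  by rewrite nwords1SS nwords2E !natrD pX0E // pY1E // hornerD hornerZ; ring.
have q_neq0 : pY1 + pX1 != 0.
  by rewrite -size_poly_gt0 size_polyDl size_pY1 ?size_pX1.
have dY : eventually_poly (uphalf d.+1) (pY1 + pX1)
    (fun m => (nwords 0 m.+1 d.+2)%:R - (nwords 0 m d.+2)%:R).
  move=> m le_m; rewrite nwords0SS nwords2E !natrD pX1E // hornerD.
  have le_half : (d.+1./2 <= uphalf d.+1)%N by rewrite uphalf_half leq_addl.
  by rewrite (eventually_poly_le le_half pY1E) //; ring.
have [P [size_P PE]] := eventually_poly_antidifference q_neq0 dY.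
by exists P; rewrite size_P size_polyDl size_pY1 ?size_pX1.
Qed.

Lemma nwords_polynomial_holds d : nwords_polynomial d.
Proof.
suff: nwords_polynomial d /\ nwords_polynomial d.+1 by case.
elim: d => [|d [IHd IHd1]]; first by split; [exact: nwords_polynomial0 | exact: nwords_polynomial1].
by split=> //; apply: nwords_polynomialSS.
Qed.

End NwordsPolynomial.

(** * One vertex of the crease pattern *)

Implicit Types (g h : nat -> bool) (k x y : nat).

(* The label of the top (x = 0), right (x = 1) or bottom (x = 2) crease of x_k. *)
Definition vertex_crease (k x : nat) : nat := 3 * k - 1 + x.

Lemma vertex_creasesE k :
  0 < k -> [:: 3 * k - 1; 3 * k; 3 * k + 1] = map (vertex_crease k) (iota 0 3).
Proof. by move=> k_gt0; rewrite /vertex_crease /=; congr [:: _; _; _]; lia. Qed.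

Definition vertex_ok (g : nat -> bool) (k : nat) : bool :=
  count (fun x => g (vertex_crease k x) != g (3 * k - 3)) (iota 0 3) == 1.

Definition vertex_letter (g : nat -> bool) (k : nat) : nat :=
  if g (vertex_crease k 0) != g (3 * k - 3) then 0
  else if g (vertex_crease k 1) != g (3 * k - 3) then 1 else 2.

Lemma vertex_letter_lt3 g k : vertex_letter g k < 3.
Proof. by rewrite /vertex_letter; case: ifP => //; case: ifP. Qed.

Lemma vertex_ext g1 g2 k :
  (forall x, x < 3 -> g1 (vertex_crease k x) = g2 (vertex_crease k x)) ->
  g1 (3 * k - 3) = g2 (3 * k - 3) ->
  vertex_ok g1 k = vertex_ok g2 k /\ vertex_letter g1 k = vertex_letter g2 k.
Proof. by move=> gE gE0; rewrite /vertex_ok /vertex_letter /= !gE ?gE0. Qed.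

Lemma vertex_okE g k x : vertex_ok g k -> x < 3 ->
  g (vertex_crease k x) = g (3 * k - 3) (+) (vertex_letter g k == x).
Proof.
move=> + x3; rewrite /vertex_ok /vertex_letter; case: x x3 => [|[|[|//]]] _ /=;
by case: (g (3 * k - 3)); case: (g (vertex_crease k 0)); case: (g (vertex_crease k 1));
   case: (g (vertex_crease k 2)).
Qed.

Lemma vertex_ok_letter g k y : y < 3 ->
  (forall x, x < 3 -> g (vertex_crease k x) = g (3 * k - 3) (+) (y == x)) ->
  vertex_ok g k /\ vertex_letter g k = y.
Proof.
move=> y3 gE; rewrite /vertex_ok /vertex_letter /= !gE //.
by case: (g _); case: y y3 {gE} => [|[|[|//]]].
Qed.

Lemma vertex_ok_xor g h k : vertex_ok g k ->
  vertex_ok (fun l => g l (+) h l) k =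
  (count (fun x => (vertex_letter g k == x) (+) h (vertex_crease k x) (+) h (3 * k - 3))
     (iota 0 3) == 1).
Proof.
move=> ok; rewrite /vertex_ok; congr (_ == 1); apply: eq_in_count => x.
rewrite mem_iota => /andP[_ x3] /=; rewrite vertex_okE //.
by case: (g _); case: (h _); case: (h _); case: (vertex_letter g k == x).
Qed.

(* The left crease of x_(k+1) is the right crease of x_k, so it differs from the
   left crease of x_k exactly when the letter of x_k is 1. *)
Definition left_value (b : bool) (w : seq nat) (k : nat) : bool :=
  b (+) odd (count_mem 1 (take k.-1 w)).

Definition label_value (b : bool) (w : seq nat) (l : nat) : bool :=
  if l == 0 then b
  else left_value b w (l.+1 %/ 3) (+) (nth 1 w (l.+1 %/ 3).-1 == l.+1 %% 3).

Lemma left_valueS b w k : 0 < k <= size w ->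
  left_value b w k.+1 = left_value b w k (+) (nth 1 w k.-1 == 1).
Proof.
move=> k_range; rewrite /left_value -(prednK (proj1 (andP k_range))) /=.
by rewrite (take_nth 1) -?cats1 ?count_cat /= ?addn0 ?oddD ?addbA //; lia.
Qed.

Lemma label_value_vertex b w k x : 0 < k -> x < 3 ->
  label_value b w (vertex_crease k x) = left_value b w k (+) (nth 1 w k.-1 == x).
Proof.
move=> k_gt0 x3; rewrite /label_value /vertex_crease.
have -> : (3 * k - 1 + x == 0) = false by lia.
have -> : (3 * k - 1 + x).+1 %/ 3 = k by lia.
by have -> : (3 * k - 1 + x).+1 %% 3 = x by lia.
Qed.

Lemma label_value_left b w k : 0 < k <= (size w).+1 ->
  label_value b w (3 * k - 3) = left_value b w k.
Proof.
case: k => [//|[_|k k_range]]; first by rewrite /left_value take0 addbF.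
have -> : 3 * k.+2 - 3 = vertex_crease k.+1 1 by rewrite /vertex_crease; lia.
by rewrite label_value_vertex // -left_valueS.
Qed.

Lemma label_value_ok b w k : all (fun x => x < 3) w -> 0 < k <= size w ->
  vertex_ok (label_value b w) k /\ vertex_letter (label_value b w) k = nth 1 w k.-1.
Proof.
move=> w3 k_range; apply: vertex_ok_letter => [|x x3].
  by apply: (all_nthP 1 w3); lia.
by rewrite label_value_vertex ?label_value_left //; lia.
Qed.

Lemma score_iota (p : nat -> nat) m : p m.+1 = 1 ->
  score (p 0) [seq p k | k <- iota 1 m] = \sum_(s < m.+1) flip_weight (p s) (p s.+1).
Proof.
elim: m p => [|m IH] p end1; first by rewrite big_ord1 /score /= end1 addn0.
rewrite big_ord_recl /= score_cons -(IH (fun k => p k.+1)) //.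
by rewrite (iotaDl 1 1) -map_comp.
Qed.

(** * Locally valid assignments of M_{2,n} as words *)

Section MiuraOri.

Variable n : nat.
Hypothesis n_gt0 : 0 < n.
Implicit Types (mu : MV n) (f : face n).

Definition is_label (l : nat) : bool := (l == 0) || (2 <= l <= 3 * n - 2).

Lemma crease_label_inj : injective (@crease_label n).
Proof.
move=> [x x_lt] [y y_lt]; rewrite /crease_label /= => xy; apply: val_inj => /=.
by move: xy; case: ifP => /eqP; case: ifP => /eqP; lia.
Qed.

Lemma is_label_crease (c : crease n) : is_label (crease_label c).
Proof. by case: c => c c_lt; rewrite /is_label /crease_label /=; case: ifP => /eqP; lia. Qed.

Lemma crease_label_onto l : is_label l -> exists c : crease n, crease_label c = l.
Proof.
move=> l_label; have l_lt : l.-1 < 3 * n - 2 by move: l_label; rewrite /is_label; lia.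
exists (Ordinal l_lt); rewrite /crease_label /=.
by move: l_label; rewrite /is_label; case: ifP; lia.
Qed.

Lemma is_label_vertex k x : 0 < k < n -> x < 3 ->
  is_label (vertex_crease k x) && is_label (3 * k - 3).
Proof. by rewrite /is_label /vertex_crease; lia. Qed.

Lemma vertex_label_ext (g1 g2 : nat -> bool) k : 0 < k < n ->
  (forall l, is_label l -> g1 l = g2 l) ->
  vertex_ok g1 k = vertex_ok g2 k /\ vertex_letter g1 k = vertex_letter g2 k.
Proof.
move=> k_range g12; apply: vertex_ext => [x x3|]; apply: g12.
  by case/andP: (is_label_vertex k_range x3).
by case/andP: (is_label_vertex k_range (ltn0Sn 2)).
Qed.

Lemma mv_at_crease mu c : mv_at mu (crease_label c) = mu c.
Proof.
apply/existsP/idP => [[c' /andP[/eqP/crease_label_inj-> //]]|mu_c].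
by exists c; rewrite eqxx.
Qed.

Lemma mv_at_flip mu f l : is_label l ->
  mv_at (face_flip mu f) l = mv_at mu l (+) (l \in face_creases f).
Proof. by move=> /crease_label_onto[c <-]; rewrite !mv_at_crease ffunE. Qed.

Lemma locally_validE mu :
  locally_valid mu = [forall k : 'I_n, (0 < k) ==> vertex_ok (mv_at mu) k].
Proof.
apply: eq_forallb => k; case: (posnP k) => [//|k_gt0].
by rewrite /vertex_ok vertex_creasesE // count_map.
Qed.

Lemma locally_valid_vertex mu k : locally_valid mu -> 0 < k < n -> vertex_ok (mv_at mu) k.
Proof.
rewrite locally_validE => /forallP valid /andP[k_gt0 k_lt].
exact: (implyP (valid (Ordinal k_lt))).
Qed.

(* A face flips two creases at each of its vertices; the flip is locally valid at
   its right vertex iff the letter there is not [face_letter f], and at its left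
   vertex iff the letter there is not [2 - face_letter f]. *)
Definition face_letter f : nat := if val f.1 == 0 then 0 else 2.

Lemma face_creases_vertex f k x : 0 < k < n -> x < 3 ->
  (vertex_crease k x \in face_creases f) =
  ((k == f.2.+1) && (x == face_letter f)) ||
  ((k.+1 == f.2.+1) && ((x == 1) || (x == face_letter f))).
Proof.
case: f => [[r r_lt] [s s_lt]] k_range x3.
rewrite /face_creases /face_letter /vertex_crease /=.
by case: ifP => ?; case: ifP => ?; case: ifP => ?; rewrite /= !inE ?orbF; lia.
Qed.

Lemma face_creases_left f k : 0 < k < n -> (3 * k - 3 \in face_creases f) = (k == f.2.+1).
Proof.
case: f => [[r r_lt] [s s_lt]] k_range; rewrite /face_creases /=.
by case: ifP => ?; case: ifP => ?; case: ifP => ?; rewrite /= !inE ?orbF; lia.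
Qed.

Lemma vertex_ok_flip g f k : 0 < k < n -> vertex_ok g k ->
  vertex_ok (fun l => g l (+) (l \in face_creases f)) k =
  ((k == f.2.+1) ==> (vertex_letter g k != face_letter f)) &&
  ((k.+1 == f.2.+1) ==> (vertex_letter g k != 2 - face_letter f)).
Proof.
move=> k_range ok; rewrite vertex_ok_xor // face_creases_left //= !face_creases_vertex //.
have : ~~ ((k == f.2.+1) && (k.+1 == f.2.+1)) by apply/negP => /andP[/eqP-> /eqP]; lia.
have : face_letter f \in [:: 0; 2] by rewrite /face_letter; case: ifP.
have := vertex_letter_lt3 g k.
case: (k == f.2.+1); case: (k.+1 == f.2.+1) => //=;
by case: (vertex_letter g k) => [|[|[|]]] //; rewrite !inE => _ /orP[] /eqP->.
Qed.

Definition letter_at mu k : nat := if 0 < k < n then vertex_letter (mv_at mu) k else 1.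

Lemma flippableE mu f : locally_valid mu ->
  flippable mu f =
  (letter_at mu f.2.+1 != face_letter f) && (letter_at mu f.2 != 2 - face_letter f).
Proof.
move=> valid; rewrite /flippable valid locally_validE /=.
have flipE k : 0 < k < n -> vertex_ok (mv_at (face_flip mu f)) k =
    ((k == f.2.+1) ==> (letter_at mu k != face_letter f)) &&
    ((k.+1 == f.2.+1) ==> (letter_at mu k != 2 - face_letter f)).
  move=> k_range; rewrite /letter_at k_range -vertex_ok_flip ?(locally_valid_vertex valid) //.
  by case: (vertex_label_ext k_range (mv_at_flip mu f)).
have face_letter_ne1 : 1 != face_letter f /\ 1 != 2 - face_letter f.
  by rewrite /face_letter; case: ifP.
apply/forallP/andP => [flip_ok|[right_ok left_ok] k]; last first.
  apply/implyP => k_gt0; rewrite flipE ?k_gt0 ?ltn_ord //.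
  by apply/andP; split; apply/implyP => /eqP; [move->|move=> [->]].
split.
  rewrite /letter_at; case: ifP => [j_range|_]; last by case: face_letter_ne1.
  have := flip_ok (Ordinal (proj2 (andP j_range))); rewrite /= flipE //= eqxx.
  by rewrite /letter_at j_range => /andP[].
rewrite /letter_at; case: ifP => [s_range|_]; last by case: face_letter_ne1.
have := flip_ok f.2; rewrite flipE // (proj1 (andP s_range)) /= eqxx.
by rewrite /letter_at s_range => /andP[].
Qed.

Lemma card_flippable mu : locally_valid mu ->
  #|[set f : face n | flippable mu f]| =
  \sum_(s < n) flip_weight (letter_at mu s) (letter_at mu s.+1).
Proof.
move=> valid; rewrite -sum1_card big_mkcond /=.
rewrite (eq_bigr (fun f => nat_of_bool (flippable mu f))) => [|f _]; last first.
  by rewrite inE; case: flippable.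
rewrite -(pair_big xpredT xpredT (fun r s => (flippable mu (r, s) : nat))) /=.
rewrite big_ord_recl big_ord1 -big_split /=; apply: eq_bigr => s _.
rewrite !flippableE // /face_letter /flip_weight /=.
by rewrite (andbC (letter_at mu s.+1 != 0)) (andbC (letter_at mu s.+1 != 2)).
Qed.

Definition word mu : seq nat := [seq letter_at mu k | k <- iota 1 n.-1].

Lemma score_word mu :
  score 1 (word mu) = \sum_(s < n) flip_weight (letter_at mu s) (letter_at mu s.+1).
Proof.
by rewrite -(prednK n_gt0) -score_iota /letter_at ?prednK ?ltnn ?andbF.
Qed.

Definition mv_of_word (b : bool) (w : seq nat) : MV n :=
  [ffun c => label_value b w (crease_label c)].

Lemma mv_at_of_word b w l : is_label l -> mv_at (mv_of_word b w) l = label_value b w l.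
Proof. by move=> /crease_label_onto[c <-]; rewrite mv_at_crease ffunE. Qed.

Lemma mv_of_word_valid b w : w \in words n.-1 ->
  locally_valid (mv_of_word b w) /\ word (mv_of_word b w) = w.
Proof.
rewrite mem_words => /andP[/eqP size_w w3].
have vertexE k (k_range : 0 < k < n) := vertex_label_ext k_range (@mv_at_of_word b w).
have wordE k : 0 < k < n -> vertex_ok (label_value b w) k /\
    vertex_letter (label_value b w) k = nth 1 w k.-1.
  by move=> k_range; apply: label_value_ok => //; rewrite size_w; lia.
split.
  rewrite locally_validE; apply/forallP => k; apply/implyP => k_gt0.
  have k_range : 0 < k < n by rewrite k_gt0 ltn_ord.
  by rewrite (vertexE _ k_range).1; case: (wordE _ k_range).
apply: (@eq_from_nth _ 1) => [|i]; first by rewrite size_map size_iota size_w.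
rewrite size_map size_iota => i_lt; rewrite (nth_map 0) ?size_iota // nth_iota // add1n.
have k_range : 0 < i.+1 < n by lia.
by rewrite /letter_at k_range (vertexE _ k_range).2; case: (wordE _ k_range).
Qed.

Lemma mv_of_wordK mu : locally_valid mu -> mv_of_word (mv_at mu 0) (word mu) = mu.
Proof.
move=> valid; set g := mv_at mu; set w := word mu.
have wE k : 0 < k < n -> nth 1 w k.-1 = vertex_letter g k.
  move=> k_range; rewrite (nth_map 0) ?size_iota ?nth_iota; try lia.
  by rewrite /letter_at add1n prednK ?k_range //; case/andP: k_range.
have leftE k : 0 < k < n -> left_value (g 0) w k = g (3 * k - 3).
  elim: k => [//|[_ _|k IH k_range]]; first by rewrite /left_value take0 addbF.
  rewrite left_valueS ?size_map ?size_iota; last lia.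
  rewrite IH ?wE; try lia.
  have -> : 3 * k.+2 - 3 = vertex_crease k.+1 1 by rewrite /vertex_crease; lia.
  by rewrite (@vertex_okE g) // locally_valid_vertex //; lia.
apply/ffunP => c; rewrite ffunE -mv_at_crease.
have := is_label_crease c; move: (crease_label c) => l l_label.
rewrite /label_value; case: eqP => [->//|l_neq0].
set k := l.+1 %/ 3; set x := l.+1 %% 3.
have k_range : 0 < k < n by move: l_label l_neq0; rewrite /is_label /k; lia.
have x3 : x < 3 by rewrite ltn_mod.
have -> : mv_at mu l = g (vertex_crease k x) by rewrite /vertex_crease /k /x; congr g; lia.
by rewrite leftE // wE // (@vertex_okE g) // locally_valid_vertex.
Qed.

Lemma word_in_words mu : word mu \in words n.-1.
Proof.
rewrite mem_words size_map size_iota eqxx /=.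
by apply/allP => x /mapP[k _ ->]; rewrite /letter_at; case: ifP; rewrite ?vertex_letter_lt3.
Qed.

Lemma mv_of_word_inj b1 b2 w1 w2 : w1 \in words n.-1 -> w2 \in words n.-1 ->
  mv_of_word b1 w1 = mv_of_word b2 w2 -> (b1, w1) = (b2, w2).
Proof.
move=> w1_in w2_in eq12; congr (_, _).
  by have := congr1 (fun mu => mv_at mu 0) eq12; rewrite !mv_at_of_word.
by have [_ <-] := mv_of_word_valid b1 w1_in; have [_ <-] := mv_of_word_valid b2 w2_in; rewrite eq12.
Qed.

Lemma v_nwords d : v n d = 2 * nwords 1 n.-1 d.
Proof.
set W := [seq w <- words n.-1 | score 1 w == d].
set L := [seq mv_of_word b w | b <- [:: true; false], w <- W].
have memL mu : (mu \in L) = locally_valid mu && (#|[set f : face n | flippable mu f]| == d).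
  apply/allpairsP/andP => [[[b w] [_ w_in ->]]|[valid deg_d]].
    move: w_in; rewrite mem_filter => /andP[/eqP score_w w_in].
    have [valid word_w] := mv_of_word_valid b w_in.
    by rewrite card_flippable // -score_word word_w score_w.
  exists (mv_at mu 0, word mu); rewrite mv_of_wordK //; split=> //; first by case: (mv_at mu 0).
  by rewrite mem_filter score_word -card_flippable // deg_d word_in_words.
have uniqL : uniq L.
  rewrite allpairs_uniq ?filter_uniq ?uniq_words // => -[b1 w1] [b2 w2].
  move=> /allpairsP[[b1' w1'] [_ w1_in [-> ->]]] /allpairsP[[b2' w2'] [_ w2_in [-> ->]]].
  by move: w1_in w2_in; rewrite !mem_filter => /andP[_ w1_in] /andP[_ w2_in]; apply: mv_of_word_inj.
rewrite /v (eq_card (B := mem L)) => [|mu]; last by rewrite inE memL.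
by rewrite (card_uniqP uniqL) size_allpairs size_filter.
Qed.

End MiuraOri.

Local Open Scope ring_scope.

Theorem theorem4p11 :
  forall d : nat, (2 <= d)%N ->
  exists p : {poly rat},
    size p = d.-1 /\
    (forall n : nat, (uphalf d + 1 <= n)%N -> (v n d)%:R = p.[n%:R]).
Proof.
move=> d _; have [[pX [size_pX pXE]] _] := nwords_polynomial_holds d.
exists ((2%:R *: pX) \Po ('X - 1)); split.
  by rewrite size_comp_poly2 ?size_XsubC // size_scale ?pnatr_eq0.
rewrite addn1; apply: eventually_poly_shift => m le_m.
by rewrite v_nwords // natrM pXE // hornerZ.
Qed.
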